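(* For $l,m,n,u,v\in\mathbb{N}$, \[ \sum_{k=-\infty}^\infty (-1)^k\binom{l+m}{l+k}\binom{m+n}{m+k}\binom{n+l}{n+k}\binom{u+v}{u+k}\binom{u+v}{v+k} =\binom{u+v}{u}\sum_{k=0}^{\infty} \frac{(l+m+n-k)!\,(u+v+k)!}{k!\,(l-k)!\,(m-k)!\,(n-k)!\,(u+k)!\,(v+k)!}. \]
   Context: Convention: $1/j!=0$ for negative integers $j$, and binomial coefficients $\binom{a}{b}$ with $b<0$ or $b>a$ are $0$. *)

From mathcomp Require Import all_boot all_order all_algebra.
Set Implicit Arguments. Unset Strict Implicit. Unset Printing Implicit Defensive.
Import Order.TTheory GRing.Theory Num.Theory.
Local Open Scope ring_scope.

(* Binomial coefficient with integer lower index: C(a,b) = 0 for b < 0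
   (and 'C(a,b) = 0 for b > a already holds in mathcomp). *)
Definition zbinom (a : nat) (b : int) : nat :=
  match b with Posz n => 'C(a, n) | Negz _ => 0%N end.

Definition zinvfact (j : int) : rat :=
  match j with Posz n => (n`!%:R)^-1 | Negz _ => 0 end.

From mathcomp Require Import all_boot all_order all_algebra.
From mathcomp Require Import ring zify.
Import Order.TTheory GRing.Theory Num.Theory.
Local Open Scope ring_scope.

(* For fixed k, the product of the first three binomials expands as
     C(a+b,a+k) C(b+c,b+k) C(c+a,c+k)
       = sum_j (a+b+c-j)! / ((a-j)! (b-j)! (c-j)! (j+k)! (j-k)!),
   proved by induction on c: multiplied by (c+1+k)(c+1-k), the step from c
   to c+1 is a telescoping sum.  Applied to (l,m,n), this turns the left-hand
   side into a sum over j of (l+m+n-j)!/((l-j)!(m-j)!(n-j)!) times the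
   alternating sum over k of C(u+v,u+k) C(u+v,v+k) / ((j+k)! (j-k)!).  That
   inner sum is Dixon's sum for (u,v,j): expanding it with the same identity
   and using sum_k (-1)^k / ((i+k)! (i-k)!) = [i = 0] evaluates it to
   (u+v)! (u+v+j)! / (u! v! j! (u+j)! (v+j)!). *)

Lemma big_nat_single (V : nmodType) (i m n : nat) (F : nat -> V) :
  (forall j, j != i -> F j = 0) ->
  \sum_(m <= j < n) F j = if (m <= i < n)%N then F i else 0.
Proof.
move=> F0; rewrite -(big_nat1_eq (@GRing.add V)) big_mkcond /=.
by apply: eq_bigr => j _; case: eqVneq => // /F0.
Qed.

Lemma expN1zS (R : unitRingType) (k : int) : (-1 : R) ^ (k + 1) = - (-1) ^ k.
Proof. by rewrite exprzDr ?unitrN1 // expr1z mulrN1. Qed.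

Lemma zinvfact_neg (x : int) : x < 0 -> zinvfact x = 0.
Proof. by case: x. Qed.

Lemma zinvfact_nat (n : nat) : zinvfact n = (n`!%:R)^-1.
Proof. by []. Qed.

Lemma natr_fact_neq0 (n : nat) : (n`!%:R : rat) != 0.
Proof. by rewrite pnatr_eq0 -lt0n fact_gt0. Qed.

Lemma zinvfact_neq0 (n : nat) : zinvfact n != 0.
Proof. by rewrite zinvfact_nat invr_eq0 natr_fact_neq0. Qed.

Lemma fact_zinvfact (n : nat) : (n`!%:R : rat) = (zinvfact n)^-1.
Proof. by rewrite zinvfact_nat invrK. Qed.

Lemma zinvfact0 : zinvfact 0 = 1.
Proof. by rewrite zinvfact_nat fact0 invr1. Qed.

Lemma zinvfact_pred (x : int) : zinvfact (x - 1) = x%:~R * zinvfact x.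
Proof.
case: x => [[|n]|n]; first by rewrite zinvfact_neg ?mul0r.
- have -> : Posz n.+1 - 1 = n by lia.
  rewrite !zinvfact_nat factS natrM invfM mulrA -[_%:~R]/(n.+1%:R).
  by rewrite mulfV ?mul1r // pnatr_eq0.
- by rewrite !zinvfact_neg ?mulr0 //; lia.
Qed.

Lemma zbinomE (N : nat) (b : int) :
  (zbinom N b)%:R = N`!%:R * zinvfact b * zinvfact (N%:Z - b) :> rat.
Proof.
case: b => [j|j]; last by rewrite /= mulr0 mul0r.
have [leNj|ltNj] := leqP j N; last first.
  by rewrite /= bin_small // zinvfact_neg ?mulr0 //; lia.
have -> : N%:Z - j%:Z = (N - j)%N by lia.
rewrite !zinvfact_nat /= -(bin_fact leNj) !natrM.
by field; rewrite !natr_fact_neq0.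
Qed.

Section Binom3Expansion.

Variables a b : nat.

(* C(a+b,a+k) C(b+c,b+k) C(c+a,c+k) / ((a+b)! (b+c)! (c+a)!) *)
Definition binom3_weight (c : nat) (k : int) : rat :=
  zinvfact (a%:Z + k) * zinvfact (a%:Z - k) * zinvfact (b%:Z + k)
  * zinvfact (b%:Z - k) * zinvfact (c%:Z + k) * zinvfact (c%:Z - k).

Definition binom3_term (c : nat) (k : int) (j : nat) : rat :=
  (a + b + c - j)`!%:R * zinvfact (a%:Z - j%:Z) * zinvfact (b%:Z - j%:Z)
  * zinvfact (c%:Z - j%:Z) * zinvfact (j%:Z + k) * zinvfact (j%:Z - k).

Definition binom3_cert (c : nat) (k : int) (j : nat) : rat :=
  - ((a + b + c.+1 - j)`!%:R * zinvfact (a%:Z - j%:Z) * zinvfact (b%:Z - j%:Z)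
     * zinvfact (c.+1%:Z - j%:Z) * zinvfact (j%:Z - 1 + k) * zinvfact (j%:Z - 1 - k)).

Lemma binom3_weightN (c : nat) (k : int) : binom3_weight c (- k) = binom3_weight c k.
Proof. by rewrite /binom3_weight !opprK; ring. Qed.

Lemma binom3_termN (c : nat) (k : int) (j : nat) :
  binom3_term c (- k) j = binom3_term c k j.
Proof. by rewrite /binom3_term !opprK; ring. Qed.

Lemma binom3_term_rec (c : nat) (k : int) (j : nat) : (j <= a)%N ->
  ((c.+1%:Z + k) * (c.+1%:Z - k))%:~R * binom3_term c.+1 k j
  - ((b + c.+1) * (a + c.+1))%:R * binom3_term c k j
  = binom3_cert c k j.+1 - binom3_cert c k j.
Proof.
move=> leja; rewrite /binom3_term /binom3_cert.
set M := (a + b + c - j)%N.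
have -> : (a + b + c.+1 - j = M.+1)%N by rewrite /M; lia.
have -> : (a + b + c.+1 - j.+1 = M)%N by rewrite /M; lia.
have defM : M%:R = a%:R + b%:R + c%:R - j%:R :> rat.
  by rewrite /M natrB ?natrD //; lia.
have -> : a%:Z - j.+1%:Z = (a%:Z - j%:Z) - 1 by lia.
have -> : b%:Z - j.+1%:Z = (b%:Z - j%:Z) - 1 by lia.
have -> : c.+1%:Z - j.+1%:Z = (c.+1%:Z - j%:Z) - 1 by lia.
have -> : c%:Z - j%:Z = (c.+1%:Z - j%:Z) - 1 by lia.
have -> : j.+1%:Z - 1 + k = j%:Z + k by lia.
have -> : j.+1%:Z - 1 - k = j%:Z - k by lia.
have -> : j%:Z - 1 + k = (j%:Z + k) - 1 by lia.
have -> : j%:Z - 1 - k = (j%:Z - k) - 1 by lia.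
rewrite !zinvfact_pred factS natrM -[M.+1]addn1 natrD defM.
ring.
Qed.

Lemma binom3_sum_rec (c : nat) (k : int) :
  ((c.+1%:Z + k) * (c.+1%:Z - k))%:~R * \sum_(0 <= j < a.+1) binom3_term c.+1 k j
  = ((b + c.+1) * (a + c.+1))%:R * \sum_(0 <= j < a.+1) binom3_term c k j.
Proof.
apply/eqP; rewrite -subr_eq0 !mulr_sumr -sumrB.
rewrite (telescope_sumr_eq (binom3_cert c k)) //; last first.
  by move=> j /andP[_ ltja]; apply: binom3_term_rec.
rewrite /binom3_cert [zinvfact (a%:Z - a.+1%:Z)]zinvfact_neg; last by lia.
have [k_lt0|k_ge0] := ltP k 0.
  by rewrite [zinvfact (0%:Z - 1 + k)]zinvfact_neg ?(mulr0, mul0r, oppr0, subrr) //; lia.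
by rewrite [zinvfact (0%:Z - 1 - k)]zinvfact_neg ?(mulr0, mul0r, oppr0, subrr) //; lia.
Qed.

Lemma binom3_expansion_edge (c : nat) :
  ((a + b)`! * (b + c.+1)`! * (c.+1 + a)`!)%:R * binom3_weight c.+1 c.+1
  = \sum_(0 <= j < a.+1) binom3_term c.+1 c.+1 j.
Proof.
rewrite (big_nat_single _ c.+1) => [|j neq_jc]; last first.
  rewrite /binom3_term; have [ltjc|ltcj] := ltnP j c.+1.
    by rewrite [zinvfact (j%:Z - _)]zinvfact_neg ?mulr0 //; lia.
  by rewrite [zinvfact (c.+1%:Z - j%:Z)]zinvfact_neg ?(mulr0, mul0r) //; lia.
have [ltca|leac] := ltnP; last first.
  by rewrite /binom3_weight (zinvfact_neg (a%:Z - c.+1%:Z)) ?(mulr0, mul0r) //; lia.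
rewrite /binom3_weight /binom3_term subrr zinvfact0.
have -> : (a + b + c.+1 - c.+1 = a + b)%N by lia.
rewrite -!PoszD (addnC c.+1 a) !natrM !fact_zinvfact.
by field; rewrite !zinvfact_neq0.
Qed.

Lemma binom3_expansion (c : nat) (k : int) :
  ((a + b)`! * (b + c)`! * (c + a)`!)%:R * binom3_weight c k
  = \sum_(0 <= j < a.+1) binom3_term c k j.
Proof.
elim: c => [|c IHc].
  rewrite big_nat_recl // big1_seq ?addr0 => [|j _]; last first.
    by rewrite /binom3_term [zinvfact (0%:Z - j.+1%:Z)]zinvfact_neg ?(mulr0, mul0r) //; lia.
  rewrite /binom3_weight /binom3_term.
  have [->|k_neq0] := eqVneq k 0.
    rewrite ?(oppr0, addr0, addn0, subn0) !natrM !fact_zinvfact zinvfact0.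
    by field; rewrite !zinvfact_neq0.
  have [k_lt0|k_ge0] := ltP k 0.
    by rewrite (zinvfact_neg (0%:Z + k)) ?(mulr0, mul0r) //; lia.
  by rewrite (zinvfact_neg (0%:Z - k)) ?(mulr0, mul0r) //; lia.
have [k_edge|k_inner] := eqVneq ((c.+1%:Z + k) * (c.+1%:Z - k)) 0.
  have [->|->] : k = c.+1 \/ k = - c.+1%:Z
    by move/eqP: k_edge; rewrite mulf_eq0 => /orP[] /eqP; lia.
  - exact: binom3_expansion_edge.
  - rewrite binom3_weightN; under eq_bigr do rewrite binom3_termN.
    exact: binom3_expansion_edge.
apply: (mulfI (_ : ((c.+1%:Z + k) * (c.+1%:Z - k))%:~R != 0)); first by rewrite intr_eq0.
rewrite binom3_sum_rec -IHc /binom3_weight.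
have -> : c%:Z + k = (c.+1%:Z + k) - 1 by lia.
have -> : c%:Z - k = (c.+1%:Z - k) - 1 by lia.
rewrite !zinvfact_pred addnS addSn !factS !natrM.
ring.
Qed.

End Binom3Expansion.

Lemma alternating_zinvfact_sum (j W : nat) : (j <= W)%N ->
  \sum_(0 <= i < (2 * W).+1) (-1) ^ (i%:Z - W%:Z)
     * (zinvfact (j%:Z + (i%:Z - W%:Z)) * zinvfact (j%:Z - (i%:Z - W%:Z)))
  = (j == 0%N)%:R.
Proof.
case: j => [|j] lejW.
  rewrite (big_nat_single _ W) => [|i neq_iW]; last first.
    have [ltiW|leWi] := ltnP i W.
      by rewrite (zinvfact_neg (0%:Z + _)) ?(mulr0, mul0r) //; lia.
    by rewrite (zinvfact_neg (0%:Z - _)) ?(mulr0, mul0r) //; lia.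
  by rewrite ifT ?subrr ?expr0z ?zinvfact0 ?mulr1 //; lia.
(* For j > 0 this is (1 - 1)^(2j) / (2j)!; instead of the binomial theorem,
   2j times each summand telescopes against h. *)
pose h i := (-1) ^ (i%:Z - W%:Z) * zinvfact (j.+1%:Z + (i%:Z - W%:Z) - 1)
            * zinvfact (j.+1%:Z - (i%:Z - W%:Z)).
suff : (j.+1 + j.+1)%:R * \sum_(0 <= i < (2 * W).+1) (-1) ^ (i%:Z - W%:Z)
     * (zinvfact (j.+1%:Z + (i%:Z - W%:Z)) * zinvfact (j.+1%:Z - (i%:Z - W%:Z))) = 0 :> rat.
  by move/eqP; rewrite mulf_eq0 pnatr_eq0 => /eqP.
rewrite mulr_sumr (telescope_sumr_eq (fun i => - h i)) // => [|i _]; last first.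
  rewrite /h.
  have -> : i.+1%:Z - W%:Z = (i%:Z - W%:Z) + 1 by lia.
  have -> : j.+1%:Z + (i%:Z - W%:Z + 1) - 1 = j.+1%:Z + (i%:Z - W%:Z) by lia.
  have -> : j.+1%:Z - (i%:Z - W%:Z + 1) = (j.+1%:Z - (i%:Z - W%:Z)) - 1 by lia.
  by rewrite expN1zS !zinvfact_pred; ring.
rewrite /h (zinvfact_neg (j.+1%:Z - _)); last by lia.
rewrite (zinvfact_neg (j.+1%:Z + (0%:Z - W%:Z) - 1)); last by lia.
by rewrite !(mulr0, mul0r) oppr0 subrr.
Qed.

Lemma dixon (a b c W : nat) : (a <= W)%N ->
  \sum_(0 <= i < (2 * W).+1) (-1) ^ (i%:Z - W%:Z) * binom3_weight a b c (i%:Z - W%:Z)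
  = (a + b + c)`!%:R * zinvfact a * zinvfact b * zinvfact c
    / ((a + b)`! * (b + c)`! * (c + a)`!)%:R.
Proof.
move=> leaW; set F := ((a + b)`! * _ * _)%:R.
have F_neq0 : F != 0 by rewrite pnatr_eq0 -lt0n !muln_gt0 !fact_gt0.
apply: (mulfI F_neq0); rewrite [RHS]mulrC divfK // mulr_sumr.
under eq_bigr => i _ do rewrite mulrCA binom3_expansion mulr_sumr.
rewrite exchange_big_nat.
under eq_bigr => j _.
  under eq_bigr => i _ do rewrite /binom3_term -[_ * zinvfact (j%:Z + _) * _]mulrA mulrCA.
  rewrite -mulr_sumr.
  over.
rewrite big_nat_recl // alternating_zinvfact_sum // big1_seq => [|j /andP[_]].
  by rewrite Monoid.mulm1 mulr1 subn0 !subr0.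
rewrite mem_index_iota => /andP[_ ltja].
by rewrite alternating_zinvfact_sum ?mulr0 //; lia.
Qed.

Lemma binom5_summand_expansion (l m n u v : nat) (k : int) :
  (-1 : rat) ^ k * (zbinom (l + m) (l%:Z + k) * zbinom (m + n) (m%:Z + k)
     * zbinom (n + l) (n%:Z + k) * zbinom (u + v) (u%:Z + k)
     * zbinom (u + v) (v%:Z + k))%:R
  = \sum_(0 <= j < l.+1) (u + v)`!%:R ^+ 2
      * ((l + m + n - j)`!%:R * zinvfact (l%:Z - j%:Z) * zinvfact (m%:Z - j%:Z)
         * zinvfact (n%:Z - j%:Z))
      * ((-1) ^ k * binom3_weight u v j k).
Proof.
transitivity ((u + v)`!%:R ^+ 2 * (-1) ^ k
    * (zinvfact (u%:Z + k) * zinvfact (u%:Z - k) * zinvfact (v%:Z + k) * zinvfact (v%:Z - k))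
    * (((l + m)`! * (m + n)`! * (n + l)`!)%:R * binom3_weight l m n k)).
  rewrite !natrM !zbinomE /binom3_weight.
  have -> : (l + m)%N%:Z - (l%:Z + k) = m%:Z - k by lia.
  have -> : (m + n)%N%:Z - (m%:Z + k) = n%:Z - k by lia.
  have -> : (n + l)%N%:Z - (n%:Z + k) = l%:Z - k by lia.
  have -> : (u + v)%N%:Z - (u%:Z + k) = v%:Z - k by lia.
  have -> : (u + v)%N%:Z - (v%:Z + k) = u%:Z - k by lia.
  ring.
rewrite binom3_expansion mulr_sumr; apply: eq_bigr => j _.
by rewrite /binom3_term /binom3_weight; ring.
Qed.

Theorem corollary5p8 (l m n u v : nat) :
  \sum_(0 <= i < (2 * (l + m + n + u + v)).+1)
     ((-1 : rat) ^ (i%:Z - (l + m + n + u + v)%N%:Z) *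
      (zbinom (l + m) (l%:Z + (i%:Z - (l + m + n + u + v)%N%:Z)) *
       zbinom (m + n) (m%:Z + (i%:Z - (l + m + n + u + v)%N%:Z)) *
       zbinom (n + l) (n%:Z + (i%:Z - (l + m + n + u + v)%N%:Z)) *
       zbinom (u + v) (u%:Z + (i%:Z - (l + m + n + u + v)%N%:Z)) *
       zbinom (u + v) (v%:Z + (i%:Z - (l + m + n + u + v)%N%:Z)))%:R)
  = ('C(u + v, u))%:R *
    \sum_(0 <= k < (l + m + n).+1)
       (((l + m + n - k)`! * (u + v + k)`!)%:R
        / ((k`! * (u + k)`! * (v + k)`!)%:R : rat)
        * zinvfact (l%:Z - k%:Z) * zinvfact (m%:Z - k%:Z)
        * zinvfact (n%:Z - k%:Z)).
Proof.
have leuW : (u <= l + m + n + u + v)%N by lia.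
under eq_bigr => i _ do rewrite binom5_summand_expansion.
rewrite exchange_big_nat.
under eq_bigr => j _ do rewrite -mulr_sumr (dixon _ _ _ _ leuW).
rewrite [in RHS](big_cat_nat (n := l.+1)) //=; last by lia.
rewrite [X in _ * (_ + X)]big1_seq ?addr0 => [|k /andP[_]]; last first.
  rewrite mem_index_iota => /andP[ltlk _].
  by rewrite (zinvfact_neg (l%:Z - k%:Z)) ?(mulr0, mul0r) //; lia.
rewrite mulr_sumr; apply: eq_big_nat => j _.
rewrite -[('C(u + v, u))%:R]/((zbinom (u + v) u)%:R : rat) zbinomE.
have -> : (u + v)%N%:Z - u%:Z = v by lia.
rewrite (addnC j u) !natrM !fact_zinvfact.
by field; rewrite !zinvfact_neq0.
Qed.
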